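(* In the setting of the context, there is a constant $N_2>0$ such that for every integer $r\ge r_0$ and all $\epsilon,\epsilon'\in\{-1,1\}$ there is a path in the Cayley graph $\Gamma(G_2,S_2)$ connecting $s_1^{\epsilon r}$ to $s_2^{\epsilon' r}$ which lies outside the open ball $B(e,r)$ and has length at most $N_2r\bigl(f(N_2r)+1\bigr)$.
   Context: $H$ is a finitely presented group with finite generating set $T$, containing a free subgroup $F$ of rank $p$ with free basis $R=\{d_1,\dots,d_p\}\subset T$. $F_x,F_y,F_z$ are free of rank $p$ with bases $R_x=\{x_i\},R_y=\{y_i\},R_z=\{z_i\}$. $G_1=[H\ast_{\langle d_i=x_iy_i^{-1}\rangle}(F_x\times F_y\times F_z)]\times\langle s_1\rangle$; $a_i=x_iz_i$, $b_i=y_iz_i$, $R_{xz}=\{a_i\}$, $R_{yz}=\{b_i\}$; $G_2=\langle G_1,s_2\mid s_2^{-1}a_is_2=b_i,\ 1\le i\le p\rangle$; $S_2=T\cup R_x\cup R_y\cup R_z\cup R_{xz}\cup R_{yz}\cup\{s_1,s_2\}$. $f=\Delta^{-1}$ where $\Delta$ is a non-decreasing bijection of $[0,\infty)$ Lipschitz equivalent to $\mathrm{Dist}_F^H$ (with $\mathrm{Dist}_F^H(n)=\max\{|g|_R:g\in F,|g|_T\le n\}$), $\Delta(r)\ge r$ for $r\ge1$, $f(|g|_R)\le|g|_T$ for $g\in F$; and $D>1$, $r_0\ge1$ are constants such that for each $r\ge r_0$ there is an element $u\in F$ palindromic with respect to $R$ with $r/D\le|u|_R\le r$ and $|u|_T\le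 Df(r)$. (Such data exist under the standing assumption that $\mathrm{Dist}_F^H$ admits an exponentially bounded sequence of palindromic certificates in $F$.) *)

From mathcomp Require Import all_boot.
From Stdlib Require Import Reals.

Set Implicit Arguments.
Unset Strict Implicit.
Unset Printing Implicit Defensive.

(* A letter over an alphabet A is (a, b) : A * bool; b = true means a^{-1}. *)
Definition letter (A : Type) := (A * bool)%type.
Definition linv (A : Type) (l : letter A) : letter A := (l.1, ~~ l.2).

(* Equality in the group <A | rels>: the congruence on words generated by
   free cancellation and insertion/deletion of relators. *)
Inductive eqv (A : Type) (rels : seq (seq (letter A))) :
    seq (letter A) -> seq (letter A) -> Prop :=
| eqv_refl w : eqv rels w w
| eqv_sym u v : eqv rels u v -> eqv rels v u
| eqv_trans u v w : eqv rels u v -> eqv rels v w -> eqv rels u w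
| eqv_cancel u v (a : letter A) : eqv rels (u ++ a :: linv a :: v) (u ++ v)
| eqv_rel u v r : List.In r rels -> eqv rels (u ++ r ++ v) (u ++ v).

Definition wmap (A B : Type) (phi : B -> A) (w : seq (letter B)) : seq (letter A) :=
  map (fun l => (phi l.1, l.2)) w.

(* is_length phi rels g n : the word length of the element g of <A|rels>
   with respect to the generating set phi(B) is exactly n
   (g is represented by a word over B of length n, and by none shorter). *)
Definition is_length (A B : Type) (phi : B -> A) (rels : seq (seq (letter A)))
    (g : seq (letter A)) (n : nat) : Prop :=
  (exists v : seq (letter B), eqv rels (wmap phi v) g /\ size v = n) /\
  (forall v : seq (letter B), eqv rels (wmap phi v) g -> (n <= size v)%N).

Definition freely_reduced (B : Type) (w : seq (letter B)) : Prop :=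
  forall u v (a : letter B), w <> u ++ a :: linv a :: v.

Inductive gen2 (T : Type) (p : nat) : Type :=
| GT of T
| GX of 'I_p | GY of 'I_p | GZ of 'I_p
| GA of 'I_p (* a_i = x_i z_i *)
| GB of 'I_p (* b_i = y_i z_i *)
| GS1 | GS2.
Arguments GT {T p}. Arguments GX {T p}. Arguments GY {T p}. Arguments GZ {T p}.
Arguments GA {T p}. Arguments GB {T p}. Arguments GS1 {T p}. Arguments GS2 {T p}.

Definition pos (A : Type) (a : A) : letter A := (a, false).
Definition neg (A : Type) (a : A) : letter A := (a, true).
Definition commw (A : Type) (a b : A) : seq (letter A) := [:: neg a; neg b; pos a; pos b].

(* Presentation of G_2 = < G_1, s2 | s2^{-1} a_i s2 = b_i >, where
   G_1 = [H *_{d_i = x_i y_i^{-1}} (F_x x F_y x F_z)] x <s1>,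
   H = < T | relsH >, with the extra generators a_i, b_i defined by
   a_i = x_i z_i, b_i = y_i z_i. *)
Definition rels2 (T : finType) (p : nat) (relsH : seq (seq (letter T)))
    (d : 'I_p -> T) : seq (seq (letter (gen2 T p))) :=
  [seq wmap GT r | r <- relsH] ++
  (* amalgamation d_i = x_i y_i^{-1} *)
  [seq [:: neg (GT (d i)); pos (GX i); neg (GY i)] | i <- enum 'I_p] ++
  (* F_x x F_y x F_z *)
  [seq commw (GX i) (GY j) | i <- enum 'I_p, j <- enum 'I_p] ++
  [seq commw (GX i) (GZ j) | i <- enum 'I_p, j <- enum 'I_p] ++
  [seq commw (GY i) (GZ j) | i <- enum 'I_p, j <- enum 'I_p] ++
  (* direct product with <s1> *)
  [seq commw GS1 (GT t) | t <- enum T] ++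
  [seq commw GS1 (GX i) | i <- enum 'I_p] ++
  [seq commw GS1 (GY i) | i <- enum 'I_p] ++
  [seq commw GS1 (GZ i) | i <- enum 'I_p] ++
  [seq [:: neg (GA i); pos (GX i); pos (GZ i)] | i <- enum 'I_p] ++
  [seq [:: neg (GB i); pos (GY i); pos (GZ i)] | i <- enum 'I_p] ++
  (* HNN relations s2^{-1} a_i s2 = b_i *)
  [seq [:: neg GS2; pos (GA i); pos GS2; neg (GB i)] | i <- enum 'I_p].

(* x^{eps r}, eps = false means +1, eps = true means -1 *)
Definition spow (A : Type) (x : A) (eps : bool) (r : nat) : seq (letter A) :=
  nseq r (x, eps).

From Pilot Require Import Defs.
From mathcomp Require Import all_boot.
From Stdlib Require Import Reals.
From Stdlib Require Import Setoid Morphisms Lra Lia.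

Set Implicit Arguments.
Unset Strict Implicit.
Unset Printing Implicit Defensive.

(* Take a palindrome [u] in [F] with [r <= |u|_R <= D r] and a word [v] over [T]
   spelling it with [|v| <= D f(D r)].  Let [U] spell [u] in the [a_i] (in the
   [b_i] if [eps' = -1]) and [V] spell [u^eps'] in [T]; the path is
   [U s_1^(-eps r) (s_2^eps' V)^r U^-1].  Since [s_1] commutes with the [a_i] and
   [b_i], and since for a palindrome [b(u) d(u) = y(u) z(u) x(u) y(u)^-1 = a(u)],
   we get [U s_2^eps' V = s_2^eps' U], so the path ends at [s_2^(eps' r)].  Along
   its three stages, the exponent of [s_1], the image [u] in [F_z], and the
   exponent of [s_2] have length at least [r]; each is read off through a
   retraction of [G_2] onto a free group, which does not increase word length.
   The path has length [2|u| + r(|v| + 2) <= N_2 r (f(N_2 r) + 1)] for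
   [N_2 = 2 D + 2]. *)

Lemma linvK (A : Type) : involutive (@linv A).
Proof. by case=> a b; rewrite /linv /= negbK. Qed.

Definition winv (A : Type) (w : seq (letter A)) : seq (letter A) :=
  rev (map (@linv A) w).

Lemma winvK (A : Type) : involutive (@winv A).
Proof. by move=> w; rewrite /winv map_rev revK -map_comp (eq_map (@linvK A)) map_id. Qed.

Lemma size_winv (A : Type) (w : seq (letter A)) : size (winv w) = size w.
Proof. by rewrite size_rev size_map. Qed.

Lemma wmap_winv (A B : Type) (phi : B -> A) w : wmap phi (winv w) = winv (wmap phi w).
Proof. by rewrite /wmap /winv map_rev -!map_comp. Qed.

Section FreeReduction.
Variable K : eqType.

Definition nocancel (x y : letter K) := y != linv x.

(* The stack [s] stores a freely reduced word in reverse order, so that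
   [foldl push_letter s w] is the free reduction of [rev s ++ w], reversed. *)
Definition push_letter (s : seq (letter K)) (a : letter K) :=
  if s is c :: s' then (if c == linv a then s' else a :: s) else [:: a].

Lemma eq_linvC (x y : letter K) : (x == linv y) = (y == linv x).
Proof. by apply/eqP/eqP => ->; rewrite linvK. Qed.

Lemma eq_linv (x : letter K) : (x == linv x) = false.
Proof. by case: x => a [] //; apply/eqP; case. Qed.

Lemma nocancelC (x y : letter K) : nocancel x y = nocancel y x.
Proof. by rewrite /nocancel eq_linvC. Qed.

Lemma sorted_push s a : sorted nocancel s -> sorted nocancel (push_letter s a).
Proof.
case: s => [|c s] //= Hs; case: ifP => H; first exact: path_sorted Hs.
by rewrite /= /nocancel H Hs.
Qed.

Lemma sorted_reduce s w : sorted nocancel s -> sorted nocancel (foldl push_letter s w).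
Proof. by elim: w s => [|a w IHw] s Hs //=; apply/IHw/sorted_push. Qed.

Lemma reduce_linv s l : sorted nocancel s -> foldl push_letter s [:: l; linv l] = s.
Proof.
case: s => [|c s] /=; first by rewrite linvK eqxx.
case: ifP => [/eqP -> | _]; last by rewrite /= linvK eqxx.
by case: s => [|e s] //= /andP[]; rewrite /nocancel linvK => /negbTE ->.
Qed.

Lemma reduce_path s a t :
  path nocancel a t -> foldl push_letter (a :: s) t = rev t ++ a :: s.
Proof.
elim: t a s => [|b t IHt] a s //= /andP[Hab Ht].
by rewrite eq_linvC (negbTE Hab) IHt // rev_cons cat_rcons.
Qed.

Lemma reduce_sorted t : sorted nocancel t -> foldl push_letter [::] t = rev t.
Proof. by case: t => [|a t] //= Ht; rewrite reduce_path // rev_cons cats1. Qed.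

Lemma size_reduce s w : size (foldl push_letter s w) <= size s + size w.
Proof.
elim: w s => [|a w IHw] s /=; first by rewrite addn0.
apply: leq_trans (IHw _) _; rewrite addnS -addSn leq_add2r.
by case: s => [|c s] //=; case: ifP => _ //=; apply: leqW.
Qed.

Lemma reduce_nil_size s t :
  sorted nocancel t -> foldl push_letter s t = [::] -> size t <= size s.
Proof.
elim: t s => [|a t IHt] s //= Ht.
case: s => [|c s] /=; first by rewrite reduce_path //; case: (rev t).
case: ifP => _; first by move/(IHt _ (path_sorted Ht)).
by rewrite reduce_path //; case: (rev t).
Qed.

Lemma freely_reducedP (w : seq (letter K)) : freely_reduced w <-> sorted nocancel w.
Proof.
split.
  elim: w => [|a [|b w] IHw] //= Hw; apply/andP; split.
    by apply/negP => /eqP Hb; apply: (Hw [::] w a); rewrite Hb.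
  by apply: IHw => u v x E; apply: (Hw (a :: u) v x); rewrite E.
move=> + u v a E; rewrite {}E.
by elim: u => [|c u IHu] /=; [rewrite /nocancel eqxx | move/path_sorted].
Qed.

Lemma sorted_winv (w : seq (letter K)) : sorted nocancel w -> sorted nocancel (winv w).
Proof.
rewrite rev_sorted sorted_map; apply: sub_sorted => x y.
by rewrite /relpre /nocancel /= linvK eq_sym.
Qed.

Lemma sorted_rev (w : seq (letter K)) : sorted nocancel w -> sorted nocancel (rev w).
Proof. by rewrite rev_sorted; apply: sub_sorted => x y; rewrite nocancelC. Qed.

Lemma reduce_nseq n x : foldl push_letter [::] (nseq n x) = nseq n x.
Proof.
rewrite reduce_sorted ?rev_nseq //; case: n => //= n.
by elim: n => //= n ->; rewrite /nocancel eq_linv.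
Qed.

End FreeReduction.

Section Projection.
Variables (A : Type) (K : eqType) (pio : A -> option K).

(* Followed by free reduction, [proj] is the homomorphism onto the free group
   on [K] that kills the generators [pio] sends to [None]. *)
Definition proj_letter (l : letter A) : seq (letter K) :=
  if pio l.1 is Some k then [:: (k, l.2)] else [::].

Definition proj (w : seq (letter A)) : seq (letter K) := flatten (map proj_letter w).

Lemma proj_cons l w : proj (l :: w) = proj_letter l ++ proj w.
Proof. by []. Qed.

Lemma proj_cat u v : proj (u ++ v) = proj u ++ proj v.
Proof. by rewrite /proj map_cat flatten_cat. Qed.

Lemma size_proj w : size (proj w) <= size w.
Proof.
elim: w => [|l w IHw] //; rewrite proj_cons size_cat [size (_ :: _)]/= -add1n leq_add //.
by rewrite /proj_letter; case: (pio _).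
Qed.

Lemma proj_take_nil k w : proj w = [::] -> proj (take k w) = [::].
Proof. by rewrite -{1}(cat_take_drop k w) proj_cat; case: (proj (take k w)). Qed.

Lemma proj_wmap_None (B : Type) (phi : B -> A) w :
  (forall b, pio (phi b) = None) -> proj (wmap phi w) = [::].
Proof.
by move=> Hphi; elim: w => [|[b e] w IHw] //; rewrite proj_cons IHw /proj_letter /= Hphi.
Qed.

Lemma proj_wmap_Some (phi : K -> A) w :
  (forall k, pio (phi k) = Some k) -> proj (wmap phi w) = w.
Proof.
by move=> Hphi; elim: w => [|[k e] w IHw] //; rewrite proj_cons IHw /proj_letter /= Hphi.
Qed.

Lemma proj_nseq a e n :
  proj (nseq n (a, e)) = if pio a is Some k then nseq n (k, e) else [::].
Proof.
elim: n => [|n IHn]; first by case: (pio a).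
by rewrite /= proj_cons IHn /proj_letter /=; case: (pio a).
Qed.

Lemma proj_flatten_nseq a e V n : proj V = [::] ->
  proj (flatten (nseq n ((a, e) :: V))) = if pio a is Some k then nseq n (k, e) else [::].
Proof.
move=> HV; elim: n => [|n IHn]; first by case: (pio a).
by rewrite /= -cat_cons proj_cat proj_cons HV IHn /proj_letter /=; case: (pio a).
Qed.

Definition kills (r : seq (letter A)) :=
  forall s, sorted (@nocancel K) s -> foldl (@push_letter K) s (proj r) = s.

Lemma kills_nil r : proj r = [::] -> kills r.
Proof. by move=> Hr s _; rewrite Hr. Qed.

Lemma kills_pair r l l' : proj r = [:: l; l'] -> l' = linv l -> kills r.
Proof. by move=> Hr Hl' s Hs; rewrite Hr Hl' reduce_linv. Qed.

Variable rels : seq (seq (letter A)).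
Hypothesis rels_killed : forall r, List.In r rels -> kills r.

Lemma reduce_proj_eqv u v : eqv rels u v ->
  forall s, sorted (@nocancel K) s ->
  foldl (@push_letter K) s (proj u) = foldl (@push_letter K) s (proj v).
Proof.
elim=> {u v} [u|u v _ IH|u v w _ IH1 _ IH2|u v a|u v r Hr] s Hs.
- by [].
- by rewrite IH.
- by rewrite IH1 // IH2.
- rewrite !proj_cat !proj_cons !foldl_cat.
  case: a => x e; rewrite /proj_letter /=; case: (pio x) => [k|] //.
  by rewrite -[X in foldl _ X (proj v)]foldl_cat (reduce_linv (k, e)) //; apply: sorted_reduce.
- by rewrite !proj_cat !foldl_cat (rels_killed Hr) //; apply: sorted_reduce.
Qed.

Lemma size_reduce_proj v w :
  eqv rels v w -> size (foldl (@push_letter K) [::] (proj w)) <= size v.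
Proof.
move=> Hvw; rewrite -(reduce_proj_eqv Hvw) //.
by apply: leq_trans (size_reduce _ _) _; rewrite add0n size_proj.
Qed.

End Projection.

Section Congruence.
Variables (A : Type) (rels : seq (seq (letter A))).

Lemma eqv_catl w u v : eqv rels u v -> eqv rels (w ++ u) (w ++ v).
Proof.
elim=> {u v} [u|u v _|u v x _ IH1 _ IH2|u v a|u v r Hr].
- exact: eqv_refl.
- exact: eqv_sym.
- exact: eqv_trans IH1 IH2.
- by rewrite !catA; apply: eqv_cancel.
- by rewrite !catA -(catA _ r); apply: eqv_rel.
Qed.

Lemma eqv_catr w u v : eqv rels u v -> eqv rels (u ++ w) (v ++ w).
Proof.
elim=> {u v} [u|u v _|u v x _ IH1 _ IH2|u v a|u v r Hr].
- exact: eqv_refl.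
- exact: eqv_sym.
- exact: eqv_trans IH1 IH2.
- by rewrite -!catA; apply: eqv_cancel.
- by rewrite -!catA; apply: eqv_rel.
Qed.

End Congruence.

#[global] Instance eqv_Equivalence A rels : Equivalence (@eqv A rels).
Proof. by split; [exact: eqv_refl | exact: eqv_sym | exact: eqv_trans]. Qed.

#[global] Instance cat_eqv_Proper A rels :
  Proper (@eqv A rels ==> @eqv A rels ==> @eqv A rels) (@cat (letter A)).
Proof. by move=> u u' Hu v v' Hv; exact: eqv_trans (eqv_catr v Hu) (eqv_catl u' Hv). Qed.

#[global] Instance cons_eqv_Proper A rels a :
  Proper (@eqv A rels ==> @eqv A rels) (cons a).
Proof. by move=> u u' Hu; apply: (eqv_catl [:: a] Hu). Qed.

Section Presentation.
Variables (A : Type) (rels : seq (seq (letter A))).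
Local Notation eqv := (eqv rels).

Lemma eqv_cancel_linv u v a : eqv (u ++ linv a :: a :: v) (u ++ v).
Proof. by have := eqv_cancel rels u v (linv a); rewrite linvK. Qed.

Lemma eqv_relator r : List.In r rels -> eqv r [::].
Proof. by move=> Hr; have := eqv_rel [::] [::] Hr; rewrite /= cats0. Qed.

Lemma eqv_winvr w : eqv (w ++ winv w) [::].
Proof.
elim: w => [|a w IHw] /=; first reflexivity.
rewrite /winv /= rev_cons -cats1 -/(winv w) catA IHw.
exact: (eqv_cancel rels [::] [::] a).
Qed.

Lemma eqv_winvl w : eqv (winv w ++ w) [::].
Proof. by have := eqv_winvr (winv w); rewrite winvK. Qed.

Lemma eqv_winv u v : eqv u v -> eqv (winv u) (winv v).
Proof.
move=> Huv; transitivity ((winv u ++ v) ++ winv v).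
  by rewrite -catA eqv_winvr cats0; reflexivity.
by rewrite (eqv_catl (winv u) (eqv_sym Huv)) eqv_winvl; reflexivity.
Qed.

Lemma eqv_letter l w : eqv (linv l :: w) [::] -> eqv [:: l] w.
Proof.
move=> Hw; transitivity ([:: l] ++ linv l :: w); last exact: (eqv_cancel rels [::] w l).
by rewrite Hw; reflexivity.
Qed.

Definition conjugates (t l m : letter A) := eqv [:: l; t] [:: t; m].
Definition commutes (l m : letter A) := eqv [:: l; m] [:: m; l].

Lemma conjugates_linv t l m : conjugates t l m -> conjugates t (linv l) (linv m).
Proof.
rewrite /conjugates => Hlm.
transitivity ([:: linv l] ++ [:: t; m] ++ [:: linv m]).
  by symmetry; exact: (eqv_cancel rels [:: linv l; t] [::] m).
by rewrite -Hlm; exact: (eqv_cancel_linv [::] [:: t; linv m] l).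
Qed.

Lemma conjugates_linvt t l m : conjugates t l m -> conjugates (linv t) m l.
Proof.
rewrite /conjugates => Hlm.
transitivity ([:: linv t] ++ [:: t; m] ++ [:: linv t]).
  by symmetry; exact: (eqv_cancel_linv [::] [:: m; linv t] t).
by rewrite -Hlm; exact: (eqv_cancel rels [:: linv t; l] [::] t).
Qed.

Lemma commutesC l m : commutes l m -> commutes m l.
Proof. by rewrite /commutes => Hlm; symmetry. Qed.

Lemma commutes_linvl l m : commutes l m -> commutes (linv l) m.
Proof. exact: (@conjugates_linv m l l). Qed.

Lemma commutes_linvr l m : commutes l m -> commutes l (linv m).
Proof. exact: (@conjugates_linvt m l l). Qed.

Lemma commutes_signs (a b : A) :
  commutes (Defs.pos a) (Defs.pos b) -> forall e e', commutes (a, e) (b, e').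
Proof.
move=> Hab [] [].
- exact: (commutes_linvl (commutes_linvr Hab)).
- exact: (commutes_linvl Hab).
- exact: (commutes_linvr Hab).
- exact: Hab.
Qed.

Lemma commutes_commw (a b : A) : eqv (commw a b) [::] -> commutes (Defs.pos a) (Defs.pos b).
Proof.
move=> Hab; rewrite /commutes; symmetry.
transitivity ([:: Defs.pos b; Defs.pos a] ++ commw a b); first by rewrite Hab; reflexivity.
rewrite /commw /=.
transitivity ([:: Defs.pos b] ++ [:: Defs.neg b; Defs.pos a; Defs.pos b]).
  exact: (eqv_cancel rels [:: Defs.pos b] [:: Defs.neg b; Defs.pos a; Defs.pos b] (Defs.pos a)).
exact: (eqv_cancel rels [::] [:: Defs.pos a; Defs.pos b] (Defs.pos b)).
Qed.

Lemma commutes_prod l m x z :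
  eqv [:: m] [:: x; z] -> commutes l x -> commutes l z -> commutes l m.
Proof.
rewrite /commutes => Hm Hx Hz.
rewrite -[[:: m; l]]/([:: m] ++ [:: l]) -[[:: l; m]]/([:: l] ++ [:: m]) Hm /=.
rewrite -[[:: l, x & [:: z]]]/([:: l; x] ++ [:: z]) Hx /=.
by rewrite -[[:: x, l & [:: z]]]/([:: x] ++ [:: l; z]) Hz; reflexivity.
Qed.

Lemma eqv_prod_linv m x z :
  eqv [:: m] [:: x; z] -> commutes x z -> eqv [:: linv m] [:: linv x; linv z].
Proof.
move=> Hm Hxz; transitivity [:: linv z; linv x]; first exact: (eqv_winv Hm).
by have := commutes_linvl (commutes_linvr Hxz); rewrite /commutes => ->; reflexivity.
Qed.

Lemma conjugates_map (I : Type) (f g : I -> letter A) t :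
  (forall i, conjugates t (f i) (g i)) -> forall w, eqv (map f w ++ [:: t]) (t :: map g w).
Proof.
move=> Hfg; elim=> [|a w IHw] /=; first reflexivity.
by rewrite IHw; exact: (eqv_catr (map g w) (Hfg a)).
Qed.

Lemma commutes_map (I J : Type) (f : I -> letter A) (g : J -> letter A) :
  (forall i j, commutes (f i) (g j)) ->
  forall u v, eqv (map f u ++ map g v) (map g v ++ map f u).
Proof.
move=> Hfg; elim=> [|a u IHu] v /=; first by rewrite cats0; reflexivity.
rewrite IHu -cat_cons.
rewrite -(@conjugates_map _ g g (f a) (fun j => commutesC (Hfg a j)) v) -catA.
reflexivity.
Qed.

Lemma eqv_map_split (I : Type) (g h k : letter I -> letter A) :
  (forall l, eqv [:: g l] [:: h l; k l]) -> (forall l l', commutes (h l) (k l')) ->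
  forall u, eqv (map g u) (map h u ++ map k u).
Proof.
move=> Hg Hhk; elim=> [|a u IHu] /=; first reflexivity.
rewrite -[g a :: _]/([:: g a] ++ _) Hg IHu /=.
rewrite -[k a :: _]/(map k [:: a] ++ map h u ++ map k u) catA.
rewrite (@commutes_map _ _ k h (fun i j => commutesC (Hhk j i)) [:: a] u) -catA.
reflexivity.
Qed.

Lemma eqv_conj_commuting (I : Type) (g : I -> letter A) s n u :
  (forall i, commutes (g i) (linv s)) ->
  eqv (nseq n s ++ map g u ++ nseq n (linv s)) (map g u).
Proof.
move=> Hg; have := commutes_map (fun i _ => Hg i) u (nseq n tt).
rewrite map_nseq => ->; rewrite catA.
have -> : nseq n (linv s) = winv (nseq n s) by rewrite /winv map_nseq rev_nseq.
by rewrite eqv_winvr; reflexivity.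
Qed.

Lemma eqv_conj_power U V t n :
  eqv (U ++ t :: V) (t :: U) -> eqv (U ++ flatten (nseq n (t :: V))) (nseq n t ++ U).
Proof.
move=> HU; elim: n => [|n IHn] /=; first by rewrite cats0; reflexivity.
by rewrite -cat_cons catA HU /= IHn; reflexivity.
Qed.

Lemma eqv_detour_word s L U t V n :
  eqv (nseq n s ++ U ++ nseq n L) U -> eqv (U ++ t :: V) (t :: U) ->
  eqv (nseq n s ++ U ++ nseq n L ++ flatten (nseq n (t :: V)) ++ winv U) (nseq n t).
Proof.
move=> HsU HtU.
transitivity ((nseq n s ++ U ++ nseq n L) ++ flatten (nseq n (t :: V)) ++ winv U).
  by rewrite -!catA; reflexivity.
by rewrite HsU catA eqv_conj_power // -catA eqv_winvr cats0; reflexivity.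
Qed.

Lemma eqv_wmap (B : Type) (phi : B -> A) relsB :
  (forall r, List.In r relsB -> List.In (wmap phi r) rels) ->
  forall u v, Defs.eqv relsB u v -> eqv (wmap phi u) (wmap phi v).
Proof.
move=> Hrels u v; elim=> {u v} [u|u v _ IH|u v x _ IH1 _ IH2|u v a|u v r Hr].
- reflexivity.
- by symmetry.
- by rewrite IH1.
- by rewrite /wmap !map_cat /=; exact: eqv_cancel.
- by rewrite /wmap !map_cat; apply: eqv_rel; exact: Hrels.
Qed.

Lemma eqv_reduce (K : eqType) (phi : K -> A) s w :
  eqv (wmap phi (rev (foldl (@push_letter K) s w))) (wmap phi (rev s ++ w)).
Proof.
elim: w s => [|a w IHw] s /=; first by rewrite cats0; reflexivity.
rewrite IHw; case: s => [|c s] /=; first reflexivity.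
case: ifP => [/eqP Hc|_]; last by rewrite [rev (a :: _)]rev_cons cat_rcons; reflexivity.
rewrite [rev (c :: s)]rev_cons cat_rcons Hc /wmap !map_cat /=; symmetry.
exact: (eqv_cancel_linv _ _ (phi a.1, a.2)).
Qed.

End Presentation.

Lemma freely_reduced_length (A : Type) (K : eqType) (phi : K -> A) rels :
  (forall w, freely_reduced w -> w <> [::] -> ~ eqv rels (wmap phi w) [::]) ->
  forall u k, freely_reduced u -> is_length phi rels (wmap phi u) k -> size u = k.
Proof.
move=> Hfree u k /freely_reducedP Hu [[v [Hv <-]] Hmin].
apply/eqP; rewrite eqn_leq Hmin; last reflexivity.
set st := foldl (@push_letter K) [::] (v ++ winv u).
have Hst : rev st = [::].
  have : eqv rels (wmap phi (rev st)) [::].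
    rewrite eqv_reduce /= /wmap map_cat -/(wmap phi v) -/(wmap phi (winv u)).
    by rewrite wmap_winv Hv eqv_winvr; reflexivity.
  case Est: (rev st) => [|x y] // Hxy; exfalso; apply: (Hfree (x :: y)) => //.
  by apply/freely_reducedP; rewrite -Est; apply/sorted_rev/sorted_reduce.
move/(congr1 rev): Hst; rewrite revK /st foldl_cat.
move/(reduce_nil_size (sorted_winv Hu)); rewrite size_winv => Hsize.
by rewrite andbT (leq_trans Hsize) // (leq_trans (size_reduce _ _)).
Qed.

Definition outside_ball (A : Type) rels (r : nat) (w0 c : seq (letter A)) :=
  forall k, k <= size c -> forall v, eqv rels v (w0 ++ take k c) -> r <= size v.

Lemma outside_ball_cat (A : Type) rels r (w0 c1 c2 : seq (letter A)) :
  outside_ball rels r w0 c1 -> outside_ball rels r (w0 ++ c1) c2 ->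
  outside_ball rels r w0 (c1 ++ c2).
Proof.
move=> H1 H2 k; rewrite size_cat take_cat => Hk v; case: ifP => [/ltnW Hk1|Hk1].
  exact: H1.
rewrite catA; apply: H2; by rewrite leq_subLR.
Qed.

Lemma outside_ball_proj (A : Type) (K : eqType) (pio : A -> option K) rels r w0 c :
  (forall r, List.In r rels -> kills pio r) -> proj pio c = [::] ->
  r <= size (foldl (@push_letter K) [::] (proj pio w0)) -> outside_ball rels r w0 c.
Proof.
move=> Hrels Hc Hw0 k _ v Hv; apply: leq_trans Hw0 _.
rewrite -[proj pio w0]cats0 -[X in proj pio w0 ++ X](proj_take_nil k Hc) -proj_cat.
exact: size_reduce_proj Hv.
Qed.

Lemma In_mem (X : eqType) (x : X) s : x \in s -> List.In x s.
Proof. by elim: s => [|y s IHs] //=; rewrite inE => /orP[/eqP ->|/IHs]; [left | right]. Qed.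

Lemma In_enum (X : finType) (x : X) : List.In x (enum X).
Proof. by apply: In_mem; rewrite mem_enum. Qed.

Lemma In_allpairs (X Y Z : Type) (f : X -> Y -> Z) x y s t :
  List.In x s -> List.In y t -> List.In (f x y) [seq f x y | x <- s, y <- t].
Proof.
elim: s => [|a s IHs] //= [<-|Hx] Hy; apply: List.in_or_app; last by right; apply: IHs.
by left; apply: List.in_map.
Qed.

Lemma In_allpairsP (X Y Z : Type) (f : X -> Y -> Z) s t z :
  List.In z [seq f x y | x <- s, y <- t] -> exists x y, z = f x y.
Proof.
elim: s => [|a s IHs] //= /List.in_app_iff[/List.in_map_iff[y [<- _]]|/IHs //].
by exists a, y.
Qed.
Arguments In_allpairsP {X Y Z f s t z}.

Definition lmap (A B : Type) (phi : B -> A) (l : letter B) : letter A := (phi l.1, l.2).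

Section G2.
Variables (T : finType) (p : nat) (relsH : seq (seq (letter T))) (d : 'I_p -> T).
Local Notation gen := (gen2 T p).
Local Notation rels := (rels2 relsH d).
Local Notation eqv := (eqv rels).

Lemma rels2_cases (P : seq (letter gen) -> Prop) :
  (forall r, P (wmap GT r)) ->
  (forall i, P [:: Defs.neg (GT (d i)); Defs.pos (GX i); Defs.neg (GY i)]) ->
  (forall i j, P (commw (GX i) (GY j))) ->
  (forall i j, P (commw (GX i) (GZ j))) ->
  (forall i j, P (commw (GY i) (GZ j))) ->
  (forall t, P (commw GS1 (GT t))) ->
  (forall i, P (commw GS1 (GX i))) ->
  (forall i, P (commw GS1 (GY i))) ->
  (forall i, P (commw GS1 (GZ i))) ->
  (forall i, P [:: Defs.neg (GA i); Defs.pos (GX i); Defs.pos (GZ i)]) ->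
  (forall i, P [:: Defs.neg (GB i); Defs.pos (GY i); Defs.pos (GZ i)]) ->
  (forall i, P [:: Defs.neg GS2; Defs.pos (GA i); Defs.pos GS2; Defs.neg (GB i)]) ->
  forall r, List.In r rels -> P r.
Proof.
move=> H0 H1 H2 H3 H4 H5 H6 H7 H8 H9 H10 H11 r.
rewrite /rels2; do 11 (case/List.in_app_iff; [
  (by case/List.in_map_iff => ? [<- _]; auto) || (by case/In_allpairsP => ? [? ->]; auto) | ]).
by case/List.in_map_iff => ? [<- _]; auto.
Qed.

Ltac in_family :=
  first [ apply: (List.in_map (fun i => _)) | apply: (In_allpairs (fun i j => _)) ];
  exact: In_enum.

Ltac in_rels2 :=
  rewrite /rels2; repeat first
    [ by apply: List.in_or_app; left; in_family | apply: List.in_or_app; right ];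
  in_family.

Lemma In_rels2_GT r : List.In r relsH -> List.In (wmap GT r) rels.
Proof. by move=> Hr; apply: List.in_or_app; left; apply: List.in_map. Qed.

Lemma eqv_Gd i : eqv [:: Defs.pos (GT (d i))] [:: Defs.pos (GX i); Defs.neg (GY i)].
Proof. by apply/eqv_letter/eqv_relator; in_rels2. Qed.

Lemma eqv_GA i : eqv [:: Defs.pos (GA i)] [:: Defs.pos (GX i); Defs.pos (GZ i)].
Proof. by apply/eqv_letter/eqv_relator; in_rels2. Qed.

Lemma eqv_GB i : eqv [:: Defs.pos (GB i)] [:: Defs.pos (GY i); Defs.pos (GZ i)].
Proof. by apply/eqv_letter/eqv_relator; in_rels2. Qed.

Lemma commutes_XY i j e e' : commutes rels (GX i, e) (GY j, e').
Proof. by apply/commutes_signs/commutes_commw/eqv_relator; in_rels2. Qed.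

Lemma commutes_XZ i j e e' : commutes rels (GX i, e) (GZ j, e').
Proof. by apply/commutes_signs/commutes_commw/eqv_relator; in_rels2. Qed.

Lemma commutes_YZ i j e e' : commutes rels (GY i, e) (GZ j, e').
Proof. by apply/commutes_signs/commutes_commw/eqv_relator; in_rels2. Qed.

Lemma commutes_S1X i e e' : commutes rels (GS1, e) (GX i, e').
Proof. by apply/commutes_signs/commutes_commw/eqv_relator; in_rels2. Qed.

Lemma commutes_S1Y i e e' : commutes rels (GS1, e) (GY i, e').
Proof. by apply/commutes_signs/commutes_commw/eqv_relator; in_rels2. Qed.

Lemma commutes_S1Z i e e' : commutes rels (GS1, e) (GZ i, e').
Proof. by apply/commutes_signs/commutes_commw/eqv_relator; in_rels2. Qed.

Lemma conjugates_S2 i : conjugates rels (Defs.pos GS2) (Defs.pos (GA i)) (Defs.pos (GB i)).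
Proof.
set s := Defs.pos (@GS2 T p); set a := Defs.pos (GA i); set b := Defs.pos (GB i).
have Hhnn : List.In [:: linv s; a; s; linv b] rels by in_rels2.
rewrite /conjugates.
transitivity [:: a; s; linv b; b].
  by symmetry; exact: (eqv_cancel_linv _ [:: a; s] [::] b).
transitivity [:: s; linv s; a; s; linv b; b].
  by symmetry; exact: (eqv_cancel _ [::] _ s).
exact: (eqv_rel [:: s] [:: b] Hhnn).
Qed.

Lemma eqv_lmap_GA l : eqv [:: lmap GA l] [:: lmap GX l; lmap GZ l].
Proof.
by case: l => i [] /=; [exact: eqv_prod_linv (eqv_GA i) (commutes_XZ _ _ _ _) | exact: eqv_GA].
Qed.

Lemma eqv_lmap_GB l : eqv [:: lmap GB l] [:: lmap GY l; lmap GZ l].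
Proof.
by case: l => i [] /=; [exact: eqv_prod_linv (eqv_GB i) (commutes_YZ _ _ _ _) | exact: eqv_GB].
Qed.

Lemma eqv_lmap_Gd l : eqv [:: lmap (GT \o d) l] [:: lmap GX l; linv (lmap GY l)].
Proof.
by case: l => i [] /=; [exact: eqv_prod_linv (eqv_Gd i) (commutes_XY _ _ _ _) | exact: eqv_Gd].
Qed.

Lemma eqv_wmap_GA u : eqv (wmap GA u) (wmap GX u ++ wmap GZ u).
Proof. exact: (eqv_map_split eqv_lmap_GA (fun l l' => commutes_XZ _ _ _ _)). Qed.

Lemma eqv_wmap_GB u : eqv (wmap GB u) (wmap GY u ++ wmap GZ u).
Proof. exact: (eqv_map_split eqv_lmap_GB (fun l l' => commutes_YZ _ _ _ _)). Qed.

Lemma eqv_wmap_Gd u : rev u = u -> eqv (wmap (GT \o d) u) (wmap GX u ++ winv (wmap GY u)).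
Proof.
move=> Hu; transitivity (wmap (@GX T p) u ++ map (@linv _ \o lmap GY) u).
  exact: (eqv_map_split eqv_lmap_Gd (fun l l' => commutes_XY _ _ _ _)).
by rewrite /winv /wmap -map_comp -map_rev Hu; reflexivity.
Qed.

Lemma eqv_GB_Gd u : rev u = u -> eqv (wmap GB u ++ wmap (GT \o d) u) (wmap GA u).
Proof.
move=> Hu; rewrite eqv_wmap_GB eqv_wmap_Gd // eqv_wmap_GA.
set X := wmap GX u; set Y := wmap GY u; set Z := wmap GZ u.
have HYZ : eqv (Y ++ Z) (Z ++ Y) by apply: commutes_map => *; apply: commutes_YZ.
have HYX : eqv (Y ++ X) (X ++ Y).
  by apply: commutes_map => *; apply: commutesC; apply: commutes_XY.
have HZX : eqv (Z ++ X) (X ++ Z).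
  by apply: commutes_map => *; apply: commutesC; apply: commutes_XZ.
rewrite HYZ -catA [Y ++ _]catA HYX -!catA eqv_winvr cats0 HZX; reflexivity.
Qed.

Lemma commutes_GA_S1 l e : commutes rels (lmap GA l) (GS1, e).
Proof.
apply: commutesC; apply: commutes_prod (eqv_lmap_GA l) _ _.
  exact: commutes_S1X.
exact: commutes_S1Z.
Qed.

Lemma commutes_GB_S1 l e : commutes rels (lmap GB l) (GS1, e).
Proof.
apply: commutesC; apply: commutes_prod (eqv_lmap_GB l) _ _.
  exact: commutes_S1Y.
exact: commutes_S1Z.
Qed.

Lemma conjugates_lmap_S2 l : conjugates rels (Defs.pos GS2) (lmap GA l) (lmap GB l).
Proof. by case: l => i []; [exact: (conjugates_linv (conjugates_S2 i)) | exact: conjugates_S2]. Qed.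

Lemma eqv_GA_S2 u v : rev u = u -> eqv v (wmap (GT \o d) u) ->
  eqv (wmap GA u ++ Defs.pos GS2 :: v) (Defs.pos GS2 :: wmap GA u).
Proof.
move=> Hu Hv; rewrite -cat1s catA (conjugates_map conjugates_lmap_S2 u) /= Hv.
by rewrite (eqv_GB_Gd Hu); reflexivity.
Qed.

Lemma eqv_GB_S2 u v : rev u = u -> eqv v (wmap (GT \o d) u) ->
  eqv (wmap GB u ++ Defs.neg GS2 :: winv v) (Defs.neg GS2 :: wmap GB u).
Proof.
move=> Hu Hv.
have HBA l : conjugates rels (Defs.neg GS2) (lmap GB l) (lmap GA l).
  exact: conjugates_linvt (conjugates_lmap_S2 l).
rewrite -cat1s catA (conjugates_map HBA u) /=; apply: (eqv_catl [:: _]).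
transitivity ((wmap GB u ++ wmap (GT \o d) u) ++ winv v).
  by apply: eqv_catr; symmetry; exact: eqv_GB_Gd.
by rewrite -Hv -catA eqv_winvr cats0; reflexivity.
Qed.

(* Retractions of [G_2] onto [F_z] (killing everything but [z_i], [a_i], [b_i],
   which go to [z_i]) and onto the infinite cyclic groups [<s_1>] and [<s_2>]. *)
Definition onto_Z (g : gen) : option 'I_p :=
  match g with GZ i | GA i | GB i => Some i | _ => None end.
Definition onto_S1 (g : gen) : option unit := if g is GS1 then Some tt else None.
Definition onto_S2 (g : gen) : option unit := if g is GS2 then Some tt else None.

Ltac kills_relator :=
  first [ by apply: kills_nil; first [ exact: proj_wmap_None | reflexivity ]
        | by apply: kills_pair; first by rewrite /proj /= ].

Lemma kills_onto_Z r : List.In r rels -> kills onto_Z r.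
Proof. by apply: rels2_cases => *; kills_relator. Qed.

Lemma kills_onto_S1 r : List.In r rels -> kills onto_S1 r.
Proof. by apply: rels2_cases => *; kills_relator. Qed.

Lemma kills_onto_S2 r : List.In r rels -> kills onto_S2 r.
Proof. by apply: rels2_cases => *; kills_relator. Qed.

Definition detour (eps eps' : bool) (r : nat) u v : seq (letter gen) :=
  let U := wmap (if eps' then GB else GA) u in
  let V := wmap GT (if eps' then winv v else v) in
  U ++ nseq r (GS1, ~~ eps) ++ flatten (nseq r ((GS2, eps') :: V)) ++ winv U.

Lemma size_detour eps eps' r u v : size (detour eps eps' r u v) = 2 * size u + r * (size v).+2.
Proof.
rewrite !size_cat size_winv size_nseq size_flatten /shape map_nseq sumn_nseq /= !size_map.
by case: eps'; rewrite ?size_winv; move: (size u) (size v) => a b; rewrite -!plusE -!multE; lia.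
Qed.

Lemma eqv_detour eps eps' r u v : rev u = u -> Defs.eqv relsH v (wmap d u) ->
  eqv (spow GS1 eps r ++ detour eps eps' r u v) (spow GS2 eps' r).
Proof.
move=> Hu Hv; have Hvd : eqv (wmap GT v) (wmap (GT \o d) u).
  by rewrite (eqv_wmap In_rels2_GT Hv) /wmap -map_comp; reflexivity.
apply: eqv_detour_word; case: eps'.
- by apply: eqv_conj_commuting => l; apply: commutes_GB_S1.
- by apply: eqv_conj_commuting => l; apply: commutes_GA_S1.
- by rewrite wmap_winv; apply: eqv_GB_S2.
- exact: eqv_GA_S2.
Qed.

Lemma detour_outside_ball eps eps' r u v : freely_reduced u -> r <= size u ->
  outside_ball rels r (spow GS1 eps r) (detour eps eps' r u v).
Proof.
move=> /freely_reducedP Hu Hr; rewrite /detour /spow /=.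
set G := if eps' then GB else GA; set V := wmap GT _.
have HG i : [/\ onto_S1 (G i) = None, onto_Z (G i) = Some i & onto_S2 (G i) = None].
  by rewrite /G; case: (eps').
have HV (K : eqType) (pio : gen -> option K) :
  (forall t, pio (GT t) = None) -> proj pio V = [::] by apply: proj_wmap_None.
apply: outside_ball_cat.
  apply: (outside_ball_proj kills_onto_S1).
    by apply: proj_wmap_None => i; case: (HG i).
  by rewrite proj_nseq reduce_nseq size_nseq.
rewrite [nseq _ _ ++ _]catA; apply: outside_ball_cat.
  apply: (outside_ball_proj kills_onto_Z).
    by rewrite proj_cat proj_nseq proj_flatten_nseq ?HV.
  rewrite proj_cat proj_nseq proj_wmap_Some => [|i]; last by case: (HG i).
  by rewrite reduce_sorted ?size_rev.
apply: (outside_ball_proj kills_onto_S2).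
  by rewrite -wmap_winv; apply: proj_wmap_None => i; case: (HG i).
rewrite !proj_cat !proj_nseq proj_flatten_nseq ?HV // proj_wmap_None => [|i]; last by case: (HG i).
by rewrite reduce_nseq size_nseq.
Qed.

End G2.

Lemma inverse_nondecreasing (Delta f : R -> R) :
  (forall x y, (0 <= x)%R -> (x <= y)%R -> (Delta x <= Delta y)%R) ->
  (forall y, (0 <= y)%R -> (0 <= f y)%R /\ Delta (f y) = y) ->
  forall y1 y2, (0 <= y1)%R -> (y1 <= y2)%R -> (f y1 <= f y2)%R.
Proof.
move=> Hmono Hf y1 y2 Hy1 Hy12; apply: Rnot_lt_le => Hlt.
have [_ E1] := Hf y1 Hy1; have [Hf2 E2] := Hf y2 (Rle_trans _ _ _ Hy1 Hy12).
have := Hmono _ _ Hf2 (Rlt_le _ _ Hlt); rewrite E1 E2 => Hy21.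
have Ey : y1 = y2 by lra.
by move: Hlt; rewrite Ey; apply: Rlt_irrefl.
Qed.

Theorem lemma4p2
  (T : finType) (relsH : seq (seq (letter T))) (p : nat) (d : 'I_p -> T)
  (Delta f : R -> R) (D r0 : R)
  (* F = <d_1,...,d_p> is free with basis R = {d_i} in H = <T | relsH> *)
  (HF : forall w : seq (letter 'I_p),
        freely_reduced w -> w <> [::] -> ~ eqv relsH (wmap d w) [::])
  (* Delta is a non-decreasing bijection of [0, oo) *)
  (HDpos : forall x, (0 <= x)%R -> (0 <= Delta x)%R)
  (HDmono : forall x y, (0 <= x)%R -> (x <= y)%R -> (Delta x <= Delta y)%R)
  (HDinj : forall x y, (0 <= x)%R -> (0 <= y)%R -> Delta x = Delta y -> x = y)
  (HDsurj : forall y, (0 <= y)%R -> exists x, (0 <= x)%R /\ Delta x = y)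
  (* f = Delta^{-1} *)
  (Hf : forall y, (0 <= y)%R -> (0 <= f y)%R /\ Delta (f y) = y)
  (* Delta is Lipschitz equivalent to Dist_F^H *)
  (HLip : exists C : nat, (0 < C)%N /\ forall n : nat,
     (forall (w : seq (letter 'I_p)) (k : nat),
        is_length d relsH (wmap d w) k ->
        (exists v : seq (letter T), eqv relsH v (wmap d w) /\ (size v <= n)%N) ->
        (INR k <= INR C * Delta (INR C * INR n))%R) /\
     (exists (w : seq (letter 'I_p)) (k : nat),
        is_length d relsH (wmap d w) k /\
        (exists v : seq (letter T), eqv relsH v (wmap d w) /\ (size v <= C * n)%N) /\
        (Delta (INR n) <= INR C * INR k)%R))
  (HDge : forall x, (1 <= x)%R -> (x <= Delta x)%R)
  (* f(|g|_R) <= |g|_T for g in F *)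
  (HfRT : forall (w : seq (letter 'I_p)) (k m : nat),
     is_length d relsH (wmap d w) k -> is_length (@id T) relsH (wmap d w) m ->
     (f (INR k) <= INR m)%R)
  (* palindromic certificates *)
  (HD : (1 < D)%R) (Hr0 : (1 <= r0)%R)
  (Hpal : forall r : R, (r0 <= r)%R ->
     exists u : seq (letter 'I_p),
       freely_reduced u /\ rev u = u /\
       (exists k : nat, is_length d relsH (wmap d u) k /\
          (r / D <= INR k)%R /\ (INR k <= r)%R) /\
       (exists v : seq (letter T), eqv relsH v (wmap d u) /\
          (INR (size v) <= D * f r)%R)) :
  exists N2 : R, (0 < N2)%R /\
    forall (r : nat) (eps eps' : bool), (r0 <= INR r)%R ->
      exists c : seq (letter (gen2 T p)),
        (* path from s1^{eps r} to s2^{eps' r} with edge labels c *)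
        eqv (rels2 relsH d) (spow GS1 eps r ++ c) (spow GS2 eps' r) /\
        (* every vertex lies outside the open ball B(e, r) *)
        (forall k : nat, (k <= size c)%N ->
           forall v : seq (letter (gen2 T p)),
             eqv (rels2 relsH d) v (spow GS1 eps r ++ take k c) -> (r <= size v)%N) /\
        (INR (size c) <= N2 * INR r * (f (N2 * INR r) + 1))%R.
Proof.
exists (2 * D + 2)%R; split=> [|r eps eps' Hr]; first lra.
have [u [Hu_red [Hu_pal [[k [Hk [HDk Hkr]]] [v [Hv Hv_size]]]]]] := Hpal (D * INR r)%R ltac:(nra).
have Hu_k : size u = k := freely_reduced_length HF Hu_red Hk; subst k.
have Hr_u : r <= size u.
  by apply/leP/INR_le; apply: Rle_trans HDk; right; field; lra.
exists (detour eps eps' r u v); split; first exact: eqv_detour.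
split; first exact: detour_outside_ball.
rewrite size_detour.
set F := f ((2 * D + 2) * INR r)%R.
have Hf_mono : (f (D * INR r) <= F)%R.
  by apply: (inverse_nondecreasing HDmono Hf); nra.
have HF_pos : (0 <= F)%R by apply: (proj1 (Hf _ _)); nra.
have Hrv : (INR r * INR (size v) <= INR r * (D * F))%R.
  by apply: Rmult_le_compat_l; nra.
have HrF : (0 <= D * (INR r * F))%R by apply: Rmult_le_pos; nra.
rewrite -!plusE -!multE !plus_INR !mult_INR !S_INR INR_0.
nra.
Qed.
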